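(* Consider one execution of the Modified NCB algorithm with inputs $k$ and $W$, where $\sqrt T\le W\le T$, and assume $968kS\le T$. On the event $E$, no arm $j$ with $\mu_j\le\frac{\mu^*}{64}$ is pulled in any round of Phase 2.
   Context: Bandit setup: $k$ arms, arm $i$ a distribution on $[0,1]$ with mean $\mu_i$, $\mu^*:=\max_i\mu_i>0$. $\log$ is the natural logarithm; $c:=3$; $T$ is the overall horizon and $S:=\frac{c^2\log T}{\mu^*}$. Modified NCB algorithm (inputs $k$, window $W$): maintain counts $n_i$ and empirical means $\widehat\mu_i$ (both initially $0$), round index $t=1$. Phase 1: while $\max_i n_i\widehat\mu_i\le 420c^2\log W$ and $t\le W$, pull a uniformly random arm, update, increment $t$. Phase 2: while $t\le W$, pull an arm maximizing $\overline{\mathrm{NCB}}_i:=\widehat\mu_i+2c\sqrt{2\widehat\mu_i\log W/n_i}$ (ties arbitrary), update, increment $t$. Canonical model: a $k\times T$ table $(Y_{i,s})$ of independent entries with $Y_{i,s}$ distributed as arm $i$, the $s$-th pull of arm $i$ yielding $Y_{i,s}$; $\widehat\mu_{i,s}:=\frac1s\sum_{r=1}^sY_{i,r}$. The uniform choices in Phase 1 are $U_1,U_2,\dots$, independent uniform in $[k]$ (independent of the table). Events: $E_1$: for every integer $r$ with $128kS\le r\le T$ and every arm $i$, the number of $r'\le r$ with $U_{r'}=i$ is at least $\frac{r}{2k}$ and at most $\frac{3r}{2k}$. $E_2$: for every arm $i$ with $\mu_i>\frac{\mu^*}{64}$ and every integer $s$ with $64S\le s\le T$, $|\mu_i-\widehat\mu_{i,s}|\le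 c\sqrt{\frac{\mu_i\log T}{s}}$. $E_3$: for every arm $j$ with $\mu_j\le\frac{\mu^*}{64}$ and every integer $s$ with $64S\le s\le T$, $\widehat\mu_{j,s}<\frac{\mu^*}{32}$. $E:=E_1\cap E_2\cap E_3$. *)

From HB Require Import structures.
From mathcomp Require Import all_boot all_order all_algebra.
From mathcomp Require Import all_classical all_reals all_analysis.
Set Implicit Arguments. Unset Strict Implicit. Unset Printing Implicit Defensive.
Import Order.TTheory GRing.Theory Num.Theory.
Local Open Scope ring_scope.

Section NCB.
Variables (R : realType) (k : nat).

Definition cst : R := 3.

(* mu^* = max_i mu_i (means are nonnegative, so 0 is a neutral element). *)
Definition mustar (mu : 'I_k -> R) : R := \big[Num.max/0]_(i < k) mu i.

Definition Spar (mu : 'I_k -> R) (T : nat) : R := cst ^+ 2 * ln (T%:R) / mustar mu.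

(* Canonical model: Y i s is the s-th pull (s >= 1) of arm i.
   Sum of the first n pulls of arm i, and empirical mean (0 when n = 0). *)
Definition sumY (Y : 'I_k -> nat -> R) (i : 'I_k) (n : nat) : R :=
  \sum_(1 <= s < n.+1) Y i s.
Definition muhat (Y : 'I_k -> nat -> R) (i : 'I_k) (n : nat) : R :=
  sumY Y i n / n%:R.

(* Number of rounds t' in [1, t] in which arm i was pulled, for a pull
   sequence a (a t = arm pulled in round t, t >= 1). *)
Definition cnt (a : nat -> 'I_k) (i : 'I_k) (t : nat) : nat :=
  \sum_(1 <= t' < t.+1) (a t' == i).

Definition cntU (U : nat -> 'I_k) (i : 'I_k) (r : nat) : nat :=
  \sum_(1 <= r' < r.+1) (U r' == i).

(* Phase-1 loop test before round t: max_i n_i muhat_i <= 420 c^2 log W,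
   with n_i, muhat_i the values after rounds 1..t-1. *)
Definition cond1 (Y : 'I_k -> nat -> R) (W : nat) (a : nat -> 'I_k) (t : nat) : Prop :=
  forall i : 'I_k, sumY Y i (cnt a i t.-1) <= 420 * cst ^+ 2 * ln (W%:R).

(* Round t belongs to Phase 1 iff the loop test succeeded before every round
   1..t (the while loop is never re-entered once it exits). *)
Definition phase1 (Y : 'I_k -> nat -> R) (W : nat) (a : nat -> 'I_k) (t : nat) : Prop :=
  forall t', (1 <= t')%N -> (t' <= t)%N -> cond1 Y W a t'.

Definition ncb (Y : 'I_k -> nat -> R) (W : nat) (a : nat -> 'I_k) (i : 'I_k) (t : nat) : R :=
  let n := cnt a i t.-1 in
  muhat Y i n + 2 * cst * Num.sqrt (2 * muhat Y i n * ln (W%:R) / n%:R).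

(* a is an execution of Modified NCB (inputs k, W) on table Y with uniform
   choices U, with arbitrary tie-breaking in Phase 2. *)
Definition is_execution (Y : 'I_k -> nat -> R) (U : nat -> 'I_k) (W : nat)
    (a : nat -> 'I_k) : Prop :=
  forall t, (1 <= t)%N -> (t <= W)%N ->
    (phase1 Y W a t -> a t = U t) /\
    (~ phase1 Y W a t -> forall i : 'I_k, ncb Y W a i t <= ncb Y W a (a t) t).

Definition E1 (mu : 'I_k -> R) (T : nat) (U : nat -> 'I_k) : Prop :=
  forall r : nat, 128 * k%:R * Spar mu T <= r%:R -> (r <= T)%N ->
    forall i : 'I_k, r%:R / (2 * k%:R) <= (cntU U i r)%:R :> R /\
                     (cntU U i r)%:R <= 3 * r%:R / (2 * k%:R) :> R.

Definition E2 (mu : 'I_k -> R) (T : nat) (Y : 'I_k -> nat -> R) : Prop :=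
  forall i : 'I_k, mustar mu / 64 < mu i ->
    forall s : nat, (1 <= s)%N -> 64 * Spar mu T <= s%:R -> (s <= T)%N ->
      `|mu i - muhat Y i s| <= cst * Num.sqrt (mu i * ln (T%:R) / s%:R).

Definition E3 (mu : 'I_k -> R) (T : nat) (Y : 'I_k -> nat -> R) : Prop :=
  forall j : 'I_k, mu j <= mustar mu / 64 ->
    forall s : nat, (1 <= s)%N -> 64 * Spar mu T <= s%:R -> (s <= T)%N ->
      muhat Y j s < mustar mu / 32.

Definition Ev mu T U Y : Prop := [/\ E1 mu T U, E2 mu T Y & E3 mu T Y].

End NCB.

From HB Require Import structures.
From mathcomp Require Import all_boot all_order all_algebra.
From mathcomp Require Import all_classical all_reals all_analysis.
From mathcomp Require Import ring lra.
Import Order.TTheory GRing.Theory Num.Theory.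
Local Open Scope ring_scope.
Set Implicit Arguments. Unset Strict Implicit. Unset Printing Implicit Defensive.

(** Let [t0] be the first round whose Phase-1 test fails. All earlier rounds are
    uniform, so the pull counts up to [t0 - 1] are the counts of [U], and some arm
    has collected reward above [420 c^2 log W >= 1890 log T] (as [T <= W^2]).
    On [E], an arm observed between [64 S] and [193 S] times has total reward
    below [1890 log T]; since by [E1] after [r >= 128 k S] uniform rounds every
    arm has between [r/2k] and [3r/2k] samples, Phase 1 lasts at least
    [128 k S] rounds and every arm enters Phase 2 with at least [64 S] samples.
    From then on [E2] keeps the index of a best arm above [7/8 mu^*] while [E3]
    keeps the index of an arm with [mu_j <= mu^*/64] below [3/32 mu^*]; by
    induction on the round such an arm is never the argmax, so its count, hence
    its index, never changes. *)

Section Counts.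
Variables (k : nat) (a : nat -> 'I_k) (i : 'I_k).

Lemma cnt0 : cnt a i 0 = 0%N.
Proof. by rewrite /cnt big_geq. Qed.

Lemma cnt_split m n : (m <= n)%N ->
  cnt a i n = (cnt a i m + \sum_(m.+1 <= r < n.+1) (a r == i))%N.
Proof. by move=> mn; rewrite /cnt (@big_cat_nat _ _ _ m.+1). Qed.

Lemma cntS r : cnt a i r.+1 = (cnt a i r + (a r.+1 == i))%N.
Proof. by rewrite (cnt_split (leqnSn r)) big_nat1. Qed.

Lemma cnt_le r : (cnt a i r <= r)%N.
Proof.
elim: r => [|r IH]; first by rewrite cnt0.
by rewrite cntS -addn1 leq_add // leq_b1.
Qed.

Lemma le_cnt m n : (m <= n)%N -> (cnt a i m <= cnt a i n)%N.
Proof. by move=> mn; rewrite (cnt_split mn) leq_addr. Qed.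

Lemma cnt_stable m n : (m <= n)%N ->
  (forall r, (m < r <= n)%N -> a r != i) -> cnt a i n = cnt a i m.
Proof.
move=> mn no_pull; rewrite (cnt_split mn) big_nat_cond big1 ?addn0 //.
move=> r /andP[/andP[mr]]; rewrite ltnS => rn _.
by rewrite (negbTE (no_pull r _)) // mr rn.
Qed.

End Counts.

Lemma eq_cnt k (a b : nat -> 'I_k) i r :
  (forall t, (0 < t <= r)%N -> a t = b t) -> cnt a i r = cnt b i r.
Proof.
move=> eq_ab; apply: eq_big_nat => t /andP[t0 tr].
by rewrite eq_ab // t0 -ltnS.
Qed.

Section Samples.
Variables (R : realType) (k W : nat) (Y : 'I_k -> nat -> R) (i : 'I_k).
Hypothesis Y_ge0 : forall s, 0 <= Y i s.

Lemma sumY0 : sumY Y i 0 = 0.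
Proof. by rewrite /sumY big_geq. Qed.

Lemma sumY_ge0 n : 0 <= sumY Y i n.
Proof. exact: sumr_ge0. Qed.

Lemma le_sumY m n : (m <= n)%N -> sumY Y i m <= sumY Y i n.
Proof.
move=> mn; rewrite /sumY [leRHS](@big_cat_nat _ _ _ m.+1) //= lerDl.
exact: sumr_ge0.
Qed.

Lemma muhat_ge0 n : 0 <= muhat Y i n.
Proof. exact: divr_ge0 (sumY_ge0 n) (ler0n _ _). Qed.

Lemma sumY_muhat n : (0 < n)%N -> sumY Y i n = n%:R * muhat Y i n.
Proof. by move=> n0; rewrite /muhat mulrC divfK // pnatr_eq0 -lt0n. Qed.

Lemma muhat_le_ncb a t : muhat Y i (cnt a i t.-1) <= ncb Y W a i t.
Proof. by rewrite /ncb lerDl mulr_ge0 ?sqrtr_ge0 // /cst mulr_ge0. Qed.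

End Samples.

Lemma sqrtr_le (R : rcfType) (x y : R) : 0 <= y -> x <= y ^+ 2 -> Num.sqrt x <= y.
Proof. by move=> y0 xy; rewrite -(ger0_norm y0) -sqrtr_sqr ler_wsqrtr. Qed.

Lemma ln_nat_ge_half (R : realType) n : (2 <= n)%N -> 1 / 2 <= ln (n%:R : R).
Proof.
move=> n2.
have ln_half : ln (2^-1 : R) <= - 1 / 2.
  by have := @le_ln1Dx R (- 1 / 2); rewrite (_ : 1 + _ = 2^-1); [apply; lra | field].
have : ln (2 : R) <= ln n%:R by rewrite ler_ln ?posrE ?ler_nat // ltr0n; case: n n2.
rewrite lnV ?posrE // in ln_half; lra.
Qed.

Lemma ln_le_2ln (R : realType) n m : (0 < n)%N -> Num.sqrt (n%:R) <= m%:R :> R ->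
  ln (n%:R : R) <= 2 * ln (m%:R).
Proof.
move=> n0 nm.
have n_pos : 0 < n%:R :> R by rewrite ltr0n.
have m_pos : 0 < m%:R :> R by apply: lt_le_trans nm; rewrite sqrtr_gt0.
have : n%:R <= m%:R ^+ 2 :> R.
  by rewrite -ler_sqrt ?exprn_ge0 // sqrtr_sqr ger0_norm // ltW.
rewrite -ler_ln ?posrE ?exprn_gt0 // lnXn //; lra.
Qed.

Section Mustar.
Variables (R : realType) (k : nat) (mu : 'I_k -> R).

Lemma le_mustar i : mu i <= mustar mu.
Proof. exact: le_bigmax. Qed.

Lemma mustar_attained : (forall i, 0 <= mu i) -> 0 < mustar mu ->
  exists i, mustar mu = mu i.
Proof.
case: k mu => [|k'] mu' mu_ge0; rewrite /mustar; first by rewrite big_ord0 ltxx.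
by have [i _ ->] := eq_bigmax (x := 0) ord0 xpredT mu' erefl (fun i _ => mu_ge0 i); exists i.
Qed.

End Mustar.

Section PhaseOne.
Variables (R : realType) (k W : nat) (Y : 'I_k -> nat -> R) (U a : nat -> 'I_k).
Hypothesis hexec : is_execution Y U W a.

Lemma cond1_first : (0 < W)%N -> cond1 Y W a 1.
Proof.
move=> W0 i; rewrite /= cnt0 sumY0; apply: mulr_ge0; first by rewrite /cst; lra.
by apply: ln_ge0; rewrite ler1n.
Qed.

Lemma phase1_exit t : (t <= W)%N -> ~ phase1 Y W a t ->
  exists t0, [/\ (1 < t0 <= t)%N, ~ cond1 Y W a t0 &
                 forall r, (0 < r < t0)%N -> a r = U r].
Proof.
move=> tW not_ph1.
have ex_fail : exists n, (0 < n <= t)%N && ~~ `[< cond1 Y W a n >].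
  apply: contrapT => no_fail; apply: not_ph1 => n n0 nt.
  apply: contrapT => fail; apply: no_fail; exists n.
  by rewrite n0 nt; apply/asboolPn.
case: (ex_minnP ex_fail) => t0 /andP[/andP[t0_pos t0t] /asboolPn t0_fail] t0_min.
have W0 : (0 < W)%N := leq_trans t0_pos (leq_trans t0t tW).
exists t0; split => //.
  rewrite t0t andbT ltn_neqAle t0_pos andbT; apply/eqP => t0_1.
  by apply: t0_fail; rewrite -t0_1; exact: cond1_first.
move=> r /andP[r0 rt0]; apply: (hexec r0 _).1.
  exact: ltnW (leq_trans rt0 (leq_trans t0t tW)).
move=> r' r'0 r'r; apply: contrapT => fail.
suff : (t0 <= r')%N by rewrite leqNgt (leq_ltn_trans r'r rt0).
apply: t0_min; rewrite r'0 (leq_trans r'r (ltnW (leq_trans rt0 t0t))) /=.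
exact/asboolPn.
Qed.

End PhaseOne.

Lemma mul_mean_lt (R : realFieldType) (L m s q h : R) : 0 < L -> 0 <= m -> 0 < s ->
  0 <= q -> s * m <= 1737 * L -> q ^+ 2 * s = m * L -> h <= m + 3 * q ->
  s * h < 1890 * L.
Proof.
move=> L0 m0 s0 q0 sm qs hq.
have sq2 : (s * q) ^+ 2 < (42 * L) ^+ 2.
  have -> : (s * q) ^+ 2 = s * m * L by rewrite exprMn mulrC mulrA qs; ring.
  nra.
have sq : s * q < 42 * L by rewrite -ltr_sqr ?nnegrE; nra.
have : s * h <= s * (m + 3 * q) by rewrite ler_pM2l.
nra.
Qed.

Section Events.
Variables (R : realType) (k T : nat) (mu : 'I_k -> R) (Y : 'I_k -> nat -> R).
Variable U : nat -> 'I_k.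
Hypotheses (hmu : forall i, 0 <= mu i <= 1) (hmustar : 0 < mustar mu).
Hypothesis hY : forall i s, 0 <= Y i s <= 1.
Hypotheses (hE1 : E1 mu T U) (hE2 : E2 mu T Y) (hE3 : E3 mu T Y).
Hypothesis hT2 : (2 <= T)%N.

Local Notation M := (mustar mu).
Local Notation L := (ln (T%:R : R)).
Local Notation S := (Spar mu T).

Let Y_ge0 i s : 0 <= Y i s. Proof. by case/andP: (hY i s). Qed.

Let L_ge : 1 / 2 <= L. Proof. exact: ln_nat_ge_half. Qed.

Let M_le1 : M <= 1.
Proof.
have [i ->] := mustar_attained (fun i => (andP (hmu i)).1) hmustar.
by case/andP: (hmu i).
Qed.

Let SM : S * M = 9 * L.
Proof. by rewrite /Spar /cst; field; rewrite lt0r_neq0. Qed.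

Let S_ge : 9 / 2 <= S.
Proof. by rewrite -(ler_pM2r hmustar) SM; move: M_le1 L_ge; lra. Qed.

Let S_gt0 : 0 < S.
Proof. by apply: lt_le_trans S_ge; lra. Qed.

Let k_gt0 : (0 < k)%N.
Proof.
have [i _] := mustar_attained (fun i => (andP (hmu i)).1) hmustar.
exact: leq_ltn_trans (leq0n i) (ltn_ord i).
Qed.

Let k_ge1 : 1 <= k%:R :> R. Proof. by rewrite ler1n. Qed.

Lemma sumY_lt_few_samples i s : (0 < s <= T)%N ->
  64 * S <= s%:R -> s%:R <= 193 * S -> sumY Y i s < 1890 * L.
Proof.
move=> /andP[s0 sT] s_ge s_le.
have s_pos : 0 < s%:R :> R by rewrite ltr0n.
have sM : s%:R * M <= 1737 * L.
  have : s%:R * M <= 193 * S * M by rewrite ler_pM2r.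
  by rewrite -mulrA SM; lra.
rewrite sumY_muhat //.
have [mu_small | mu_large] := leP (mu i) (M / 64).
  by have := hE3 mu_small s0 s_ge sT; move: L_ge; nra.
have := hE2 mu_large s0 s_ge sT; rewrite ler_norml => /andP[dev _].
case/andP: (hmu i) => mu0 mu1.
apply: (mul_mean_lt (q := Num.sqrt (mu i * L / s%:R)) _ mu0 s_pos (sqrtr_ge0 _)).
- by move: L_ge; lra.
- by apply: le_trans sM; rewrite ler_pM2l // le_mustar.
- by rewrite sqr_sqrtr ?divfK ?lt0r_neq0 // divr_ge0 // mulr_ge0 // ln_ge0 // ler1n ltnW.
- by move: dev; rewrite /cst; lra.
Qed.

Lemma cntU_ge i r : 128 * k%:R * S <= r%:R -> (r <= T)%N ->
  64 * S <= (cntU U i r)%:R.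
Proof.
move=> r_ge rT; have [lo _] := hE1 r_ge rT i; apply: le_trans lo.
rewrite ler_pdivlMr; last by move: k_ge1; lra.
by move: r_ge; rewrite -mulrA [_ * (2 * _)]mulrCA mulrA; lra.
Qed.

Hypothesis hT : 968 * k%:R * S <= T%:R.

Lemma phase1_long i r : 1890 * L < sumY Y i (cntU U i r) -> 128 * k%:R * S <= r%:R.
Proof.
move=> big_sum; rewrite leNgt; apply/negP => r_small.
have x_ge0 : 0 <= 128 * k%:R * S by apply: mulr_ge0 (ltW S_gt0); rewrite mulr_ge0.
pose r1 := (Num.truncn (128 * k%:R * S)).+1.
have r1_gt : 128 * k%:R * S < r1%:R := truncnS_gt _.
have r1_le : r1%:R <= 128 * k%:R * S + 1.
  by rewrite /r1 -natr1 lerD2r; case/andP: (truncn_itv x_ge0).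
have r1T : (r1 <= T)%N.
  rewrite truncn_lt_nat //; apply: lt_le_trans hT.
  by rewrite ltr_pM2r // ltr_pM2r ?ltr0n // ltr_nat.
have rr1 : (r <= r1)%N by rewrite -(ler_nat R); exact: ltW (lt_trans r_small r1_gt).
have s_ge := cntU_ge i (ltW r1_gt) r1T.
have s_le : (cntU U i r1)%:R <= 193 * S.
  have [_ hi] := hE1 (ltW r1_gt) r1T i; apply: le_trans hi _.
  have k1 := k_ge1.
  have kS : 9 / 2 * k%:R <= S * k%:R by rewrite ler_wpM2r.
  have bound : 3 * r1%:R <= 386 * (k%:R * S) by lra.
  rewrite ler_pdivrMr ?mulr_gt0 ?ltr0n //.
  by rewrite (_ : 193 * S * (2 * k%:R) = 386 * (k%:R * S)) //; ring.
have s_pos : (0 < cntU U i r1)%N.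
  by rewrite -(ltr_nat R); apply: lt_le_trans s_ge; rewrite mulr_gt0.
have sT : (cntU U i r1 <= T)%N := leq_trans (cnt_le _ _ _) r1T.
have := sumY_lt_few_samples i (introT andP (conj s_pos sT)) s_ge s_le.
have := le_sumY (fun s => Y_ge0 i s) (le_cnt U i rr1).
lra.
Qed.

Lemma mul_mustar_ln_le x : 64 * S <= x -> M * L <= M ^+ 2 / 576 * x.
Proof.
move=> x_ge.
have -> : M * L = M ^+ 2 / 576 * (64 * S).
  rewrite (_ : _ * (64 * S) = M * (S * M) / 9); last by field.
  by rewrite SM mulrCA [9 * _]mulrC mulfK.
apply: ler_wpM2l x_ge.
by apply: divr_ge0; [exact: sqr_ge0 | exact: ler0n].
Qed.

Variable W : nat.
Hypotheses (hW1 : (0 < W)%N) (hWT : (W <= T)%N).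

Lemma ncb_best_ge a i t : mu i = M -> 64 * S <= (cnt a i t.-1)%:R ->
  (cnt a i t.-1 <= T)%N -> 7 / 8 * M <= ncb Y W a i t.
Proof.
move=> muiM n_ge nT; set n := cnt a i t.-1 in n_ge nT *.
have n_pos : 0 < n%:R :> R by apply: lt_le_trans n_ge; rewrite mulr_gt0.
have n0 : (0 < n)%N by rewrite -(ltr_nat R).
have mu_large : M / 64 < mu i by rewrite muiM ltr_pdivrMr // ltr_pMr // ltr1n.
have := hE2 mu_large n0 n_ge nT; rewrite muiM ler_norml => /andP[_ dev].
have rad : Num.sqrt (M * L / n%:R) <= M / 24.
  apply: sqrtr_le; first by rewrite divr_ge0 ?ltW.
  rewrite ler_pdivrMr // (_ : (M / 24) ^+ 2 = M ^+ 2 / 576); last by field.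
  exact: mul_mustar_ln_le.
apply: le_trans (muhat_le_ncb _ _ _ _ _).
by move: dev rad; rewrite /cst; lra.
Qed.

Lemma ncb_bad_le a j t : mu j <= M / 64 -> 64 * S <= (cnt a j t.-1)%:R ->
  (cnt a j t.-1 <= T)%N -> ncb Y W a j t <= 3 / 32 * M.
Proof.
move=> mu_small n_ge nT; rewrite /ncb /=; set n := cnt a j t.-1 in n_ge nT *.
have n_pos : 0 < n%:R :> R by apply: lt_le_trans n_ge; rewrite mulr_gt0.
have n0 : (0 < n)%N by rewrite -(ltr_nat R).
have h_lt := hE3 mu_small n0 n_ge nT.
have h_ge0 := muhat_ge0 (fun s => Y_ge0 j s) n.
have lnW_ge0 : 0 <= ln (W%:R : R) by rewrite ln_ge0 // ler1n.
have lnW_le : ln (W%:R : R) <= L by rewrite ler_ln ?posrE ?ltr0n ?ler_nat // (leq_trans hW1).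
have rad : Num.sqrt (2 * muhat Y j n * ln W%:R / n%:R) <= M / 96.
  apply: sqrtr_le; first by rewrite divr_ge0 ?ltW // mulr_ge0 // mulr_ge0.
  rewrite ler_pdivrMr // (_ : (M / 96) ^+ 2 = M ^+ 2 / 576 / 16); last by field.
  have := mul_mustar_ln_le n_ge.
  have : muhat Y j n * ln W%:R <= M / 32 * L by rewrite ler_pM // ltW.
  lra.
by move: rad h_lt; rewrite /cst; lra.
Qed.

Hypothesis hWlo : Num.sqrt (T%:R) <= W%:R :> R.
Variables (a : nat -> 'I_k) (t0 : nat).
Hypothesis hexec : is_execution Y U W a.
Hypotheses (t0_pos : (0 < t0)%N) (t0_exit : ~ cond1 Y W a t0).
Hypothesis t0_uniform : forall r, (0 < r < t0)%N -> a r = U r.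

Lemma cnt_phase1 i r : (r < t0)%N -> cnt a i r = cntU U i r.
Proof.
move=> rt0; apply: eq_cnt => t /andP[t_pos tr].
by apply: t0_uniform; rewrite t_pos (leq_ltn_trans tr rt0).
Qed.

Lemma phase1_exit_late : 128 * k%:R * S <= t0.-1%:R.
Proof.
have [i /negP] := (existsNP _).2 t0_exit; rewrite -ltNge => big_sum.
apply: (phase1_long (i := i)); rewrite -cnt_phase1 ?prednK //.
have := ln_le_2ln (ltnW hT2) hWlo.
by move: big_sum; rewrite /cst; lra.
Qed.

Lemma bad_arm_never_pulled j t : mu j <= M / 64 -> (t0 <= t <= W)%N -> a t != j.
Proof.
move=> mu_small.
have [istar best] := mustar_attained (fun i => (andP (hmu i)).1) hmustar.
elim/ltn_ind: t => t IH /andP[t0t tW]; apply/negP => /eqP pulled.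
have t_pos : (0 < t)%N := leq_trans t0_pos t0t.
have tT : (t.-1 <= T)%N := leq_trans (leq_pred t) (leq_trans tW hWT).
have r0_lt : (t0.-1 < t0)%N by rewrite ltn_predL.
have n_ge i : (cntU U i t0.-1 <= cnt a i t.-1)%N -> 64 * S <= (cnt a i t.-1)%:R.
  move=> le_n; apply: le_trans (_ : _ <= (cntU U i t0.-1)%:R) _; last by rewrite ler_nat.
  apply: cntU_ge phase1_exit_late _.
  exact: leq_trans (leq_pred t0) (leq_trans t0t (leq_trans tW hWT)).
have cnt_i : (cntU U istar t0.-1 <= cnt a istar t.-1)%N.
  by rewrite -cnt_phase1 // le_cnt // -!subn1 leq_sub2r.
have cnt_j : cnt a j t.-1 = cntU U j t0.-1.
  rewrite -cnt_phase1 //; apply: cnt_stable => [|r /andP[r0r rt]].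
    by rewrite -!subn1 leq_sub2r.
  apply: IH; first by rewrite -(prednK t_pos) ltnS.
  by rewrite -(prednK t0_pos) r0r (leq_trans rt (leq_trans (leq_pred t) tW)).
have := (hexec t_pos tW).2 (fun ph => t0_exit (ph t0 t0_pos t0t)) istar.
rewrite pulled.
have := ncb_best_ge (esym best) (n_ge _ cnt_i) (leq_trans (cnt_le _ _ _) tT).
have := ncb_bad_le mu_small (n_ge _ (eq_leq (esym cnt_j))) (leq_trans (cnt_le _ _ _) tT).
move: hmustar; lra.
Qed.

End Events.

Theorem lemma10 (R : realType) (k T W : nat)
    (mu : 'I_k -> R) (Y : 'I_k -> nat -> R) (U : nat -> 'I_k) (a : nat -> 'I_k)
    (hmu : forall i, 0 <= mu i <= 1)
    (hmustar : 0 < mustar mu)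
    (hY : forall i s, 0 <= Y i s <= 1)
    (hWlo : Num.sqrt (T%:R) <= W%:R :> R) (hWhi : (W <= T)%N)
    (hT : 968 * k%:R * Spar mu T <= T%:R)
    (hexec : is_execution Y U W a)
    (hE : Ev mu T U Y) :
  forall (j : 'I_k) (t : nat), mu j <= mustar mu / 64 ->
    (1 <= t)%N -> (t <= W)%N -> ~ phase1 Y W a t -> a t != j.
Proof.
move=> j t mu_small t_pos tW not_ph1; case: hE => hE1 hE2 hE3.
have [t0 [/andP[t0_gt1 t0t] t0_exit t0_uniform]] := phase1_exit hexec tW not_ph1.
have W_pos : (0 < W)%N := leq_trans t_pos tW.
have T_gt1 : (1 < T)%N := leq_trans t0_gt1 (leq_trans t0t (leq_trans tW hWhi)).
apply: (bad_arm_never_pulled hmu hmustar hY hE1 hE2 hE3 T_gt1 hT W_pos hWhi hWlo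
         hexec (ltnW t0_gt1) t0_exit t0_uniform mu_small).
by rewrite t0t tW.
Qed.
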